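(* Let $P$ be a propositional normal logic program with countably many rules, and let $Z$ be its set of propositional atoms. Then, for every countable ordinal $\alpha<\Omega$, the immediate consequence operator $T_P:V^Z\to V^Z$ is $\alpha$-continuous with respect to the relations $\sqsubseteq_\alpha$ on $V^Z$.
   Context: Truth values. Let $\Omega$ be the first uncountable ordinal. $V$ consists of values $F_\alpha,T_\alpha$ ($\alpha<\Omega$) and $0$, totally ordered by $$F_0<F_1<\dots<F_\alpha<\dots<0<\dots<T_\alpha<\dots<T_1<T_0.$$ This is a complete lattice with supremum $\bigvee$. Order of a value: $order(F_\alpha)=order(T_\alpha)=\alpha$ and $order(0)=+\infty$. Relations on $V$, for $\alpha<\Omega$: $x\sqsubseteq_\alpha y$ iff either $x=y$, or both $order(x)\ge\alpha$ and $order(y)\ge\alpha$ and at least one of the following holds: both orders are $>\alpha$; $x=F_\alpha$; $y=T_\alpha$. Write $=_\alpha$ for the induced equivalence. The operation $\bigsqcup_\alpha$ on $V$, for $X\subseteq(x]_\alpha$ where $(x]_\alpha=\{y:\forall\beta<\alpha,\ x=_\beta y\}$: - if $order(x)<\alpha$, then $\bigsqcup_\alpha X=x$; - otherwise $\bigsqcup_\alpha X$ is $T_\alpha$ if $T_\alpha\in X$, is $F_\alpha$ if $X\subseteq\{F_\alpha\}$, and is $F_{\alpha+1}$ otherwise. Interpretations. $V^Z$ is the set of interpretations. On $V^Z$: $I\le J$ iff $I(z)\le J(z)$ for all $z$; $I\sqsubseteq_\alpha J$ iff $I(z)\sqsubseteq_\alpha J(z)$ for all $z\in Z$; $\bigsqcup_\alpha$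 and $\bigvee$ are computed pointwise. Programs. A rule has the form $p\leftarrow l_1,\dots,l_n$, where $p\in Z$ and each $l_i$ is either an atom $q$ or a negated atom $\sim q$ with $q\in Z$; alternatively the body is the constant true or false. An interpretation $I$ extends to bodies as follows: - $I(\sim q)=\sim(I(q))$, where $\sim F_\beta=T_{\beta+1}$, $\sim T_\beta=F_{\beta+1}$ and $\sim0=0$; - $I(l_1,\dots,l_n)=\min\{I(l_1),\dots,I(l_n)\}$; - $I(\mathrm{true})=T_0$ and $I(\mathrm{false})=F_0$. $T_P(I)(p)=\bigvee\{I(l_1,\dots,l_n):(p\leftarrow l_1,\dots,l_n)\in P\}$. $\alpha$-continuity. A function $f:V^Z\to V^Z$ is $\alpha$-monotonic if $I\sqsubseteq_\alpha J$ implies $f(I)\sqsubseteq_\alpha f(J)$. It is $\alpha$-continuous if it is $\alpha$-monotonic and, for every sequence $(I_n)_{n\ge0}$ with $I_n\sqsubseteq_\alpha I_{n+1}$, we have $f(\bigsqcup_\alpha\{I_n:n\ge0\})=_\alpha\bigsqcup_\alpha\{f(I_n):n\ge0\}$. *)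

From Stdlib Require Import List Classical ClassicalEpsilon.
Import ListNotations.
Set Implicit Arguments.

(* The first uncountable ordinal Omega, presented abstractly: a type O *)
(* with a (boolean) strict order lt which is a well-order, O itself is *)
(* uncountable, and every proper initial segment {b | b < a} is        *)
(* countable.  This characterises omega_1 up to order isomorphism.     *)
Definition countable_type (A : Type) : Prop :=
  exists f : A -> nat, forall x y, f x = f y -> x = y.

Definition is_Omega (O : Type) (lt : O -> O -> bool) (o0 : O) (succ : O -> O)
  : Prop :=
  (forall a, lt a a = false) /\
  (forall a b c, lt a b = true -> lt b c = true -> lt a c = true) /\
  (forall a b, a = b \/ lt a b = true \/ lt b a = true) /\
  well_founded (fun a b => lt a b = true) /\
  ~ countable_type O /\
  (forall a, countable_type {b : O | lt b a = true}) /\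
  (forall a, lt a o0 = false) /\
  (forall a, lt a (succ a) = true /\ forall b, lt a b = true -> lt b (succ a) = false).

Section Values.
Variables (O : Type) (lt : O -> O -> bool) (o0 : O) (succ : O -> O).

Inductive V : Type := VF (a : O) | VT (a : O) | V0.

(* total order F_0 < F_1 < ... < 0 < ... < T_1 < T_0 *)
Definition leV (x y : V) : Prop :=
  match x, y with
  | VF a, VF b => lt b a = false
  | VF _, _ => True
  | V0, VF _ => False
  | V0, _ => True
  | VT a, VT b => lt a b = false
  | VT _, _ => False
  end.

Definition leVb (x y : V) : bool :=
  match x, y with
  | VF a, VF b => negb (lt b a)
  | VF _, _ => true
  | V0, VF _ => false
  | V0, _ => true
  | VT a, VT b => negb (lt a b)
  | VT _, _ => false
  end.

Definition minV (x y : V) : V := if leVb x y then x else y.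

Definition is_sup (S : V -> Prop) (v : V) : Prop :=
  (forall w, S w -> leV w v) /\ (forall u, (forall w, S w -> leV w u) -> leV v u).

Definition supV (S : V -> Prop) : V := epsilon (inhabits V0) (is_sup S).

(* order(x) >= a, order(x) > a, order(x) < a ; order(0) = +infinity *)
Definition ord_ge (x : V) (a : O) : Prop :=
  match x with VF b | VT b => lt b a = false | V0 => True end.
Definition ord_gt (x : V) (a : O) : Prop :=
  match x with VF b | VT b => lt a b = true | V0 => True end.
Definition ord_lt (x : V) (a : O) : Prop :=
  match x with VF b | VT b => lt b a = true | V0 => False end.

Definition sqle (a : O) (x y : V) : Prop :=
  x = y \/
  (ord_ge x a /\ ord_ge y a /\
   ((ord_gt x a /\ ord_gt y a) \/ x = VF a \/ y = VT a)).

Definition sqeq (a : O) (x y : V) : Prop := sqle a x y /\ sqle a y x.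

Definition seg (a : O) (x : V) : V -> Prop :=
  fun y => forall b, lt b a = true -> sqeq b x y.

(* the operation |_|_a applied to X (a subset of (x]_a) *)
Definition lubA (a : O) (x : V) (X : V -> Prop) : V :=
  if excluded_middle_informative (ord_lt x a) then x
  else if excluded_middle_informative (X (VT a)) then VT a
  else if excluded_middle_informative (forall y, X y -> y = VF a) then VF a
  else VF (succ a).

Variable Z : Type.
Definition interp := Z -> V.

Definition sqleI (a : O) (I J : interp) : Prop := forall z, sqle a (I z) (J z).
Definition sqeqI (a : O) (I J : interp) : Prop := forall z, sqeq a (I z) (J z).

(* pointwise |_|_a of the set {I_n : n >= 0}; each I_n lies in (I_0]_a *)
Definition lubA_seq (a : O) (I : nat -> interp) : interp :=
  fun z => lubA a (I 0 z) (fun v => exists n, I n z = v).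

Inductive literal : Type := Pos (q : Z) | Neg (q : Z).
Inductive body : Type := BLits (ls : list literal) | BTrue | BFalse.
Record rule : Type := Rule { head : Z; rbody : body }.

Definition negV (x : V) : V :=
  match x with VF b => VT (succ b) | VT b => VF (succ b) | V0 => V0 end.

Definition eval_lit (I : interp) (l : literal) : V :=
  match l with Pos q => I q | Neg q => negV (I q) end.

(* min of the literal values (an empty conjunction is T_0, i.e. true) *)
Definition eval_body (I : interp) (bd : body) : V :=
  match bd with
  | BLits ls => fold_right (fun l acc => minV (eval_lit I l) acc) (VT o0) ls
  | BTrue => VT o0
  | BFalse => VF o0
  end.

Definition program := rule -> Prop.

Definition TP (P : program) (I : interp) : interp :=
  fun p => supV (fun v => exists r, P r /\ head r = p /\ eval_body I (rbody r) = v).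

Definition alpha_monotonic (a : O) (f : interp -> interp) : Prop :=
  forall I J, sqleI a I J -> sqleI a (f I) (f J).

Definition alpha_continuous (a : O) (f : interp -> interp) : Prop :=
  alpha_monotonic a f /\
  forall I : nat -> interp, (forall n, sqleI a (I n) (I (S n))) ->
    sqeqI a (f (lubA_seq a I)) (lubA_seq a (fun n => f (I n))).

End Values.

(* The relation [=_a on V is the identity outside the band [F_a, T_a] of the
   values of order >= a, and inside the band it only distinguishes the two end points F_a and
   T_a from the interior (sqle_iff).  Everything follows from this description and from V
   being a complete total order.
   - Monotonicity.  Negation maps the band into its interior; min is monotone because a value
     lying between two related values is related to both; suprema of elementwise related sets
     are related (supV_mono).  Hence body values and T_P are a-monotone (TP_mono).
   - Continuity.  An [=_a-chain is eventually constant up to =_a (chain_stable), and |_|_a of a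
     chain lies in the class of any bound that the chain reaches (lub_chain_class).  So the
     limit J of a chain (I_n) is eventually reached by every atom, hence by every (finite) body,
     hence by T_P(J) itself at some finite stage (supV_reached): a supremum in the band is
     determined up to =_a by whether it is T_a, exceeds F_a, or equals F_a.  Then |_|_a of the
     chain T_P(I_n) is T_P(J) up to =_a.
   The argument does not need the countability of the program. *)

From Stdlib Require Import List Classical ClassicalEpsilon Lia.
Import ListNotations.
Set Implicit Arguments.
Unset Strict Implicit.

Section AlphaContinuity.

Variables (O : Type) (lt : O -> O -> bool) (o0 : O) (succ : O -> O).
Hypothesis HO : is_Omega lt o0 succ.

Lemma lt_irrefl x : lt x x = false.
Proof. apply HO. Qed.

Lemma lt_trans x y z : lt x y = true -> lt y z = true -> lt x z = true.
Proof. apply HO. Qed.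

Lemma lt_trichotomy x y : x = y \/ lt x y = true \/ lt y x = true.
Proof. apply HO. Qed.

Lemma lt_asym x y : lt x y = true -> lt y x = false.
Proof.
  intros Hxy. destruct (lt y x) eqn:Hyx; auto.
  pose proof (lt_trans Hxy Hyx) as Hxx. rewrite lt_irrefl in Hxx. discriminate.
Qed.

(* [lt y x = false] is the non-strict order [x <= y]; it is total and antisymmetric. *)
Lemma not_lt x y : lt x y = false -> x = y \/ lt y x = true.
Proof. intros H. destruct (lt_trichotomy x y) as [|[|]]; auto. congruence. Qed.

Lemma not_lt_antisym x y : lt x y = false -> lt y x = false -> x = y.
Proof. intros H1 H2. destruct (not_lt H1) as [|H]; congruence. Qed.

Lemma not_lt_trans x y z : lt y x = false -> lt z y = false -> lt z x = false.
Proof.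
  intros H1 H2. destruct (not_lt H1) as [->|Hxy]; auto.
  destruct (lt z x) eqn:Hzx; auto. rewrite <- H2. symmetry. exact (lt_trans Hzx Hxy).
Qed.

Lemma not_lt_lt_trans x y z : lt y x = false -> lt y z = true -> lt x z = true.
Proof.
  intros H1 H2. destruct (not_lt H1) as [->|H]; auto. exact (lt_trans H H2).
Qed.

Lemma lt_succ x : lt x (succ x) = true.
Proof. apply HO. Qed.

Lemma succ_least x y : lt x y = true -> lt y (succ x) = false.
Proof. apply HO. Qed.

Lemma exists_least (Q : O -> Prop) :
  (exists x, Q x) -> exists m, Q m /\ forall y, Q y -> lt y m = false.
Proof.
  intros [x Hx]. apply NNPP; intros Hnone. revert Hx.
  induction x as [x IH] using (well_founded_ind (proj1 (proj2 (proj2 (proj2 HO))))).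
  intros Hx. apply Hnone. exists x. split; auto.
  intros y Hy. destruct (lt y x) eqn:Hyx; auto. destruct (IH y Hyx Hy).
Qed.

Local Notation vle := (leV lt).

Lemma vle_refl x : vle x x.
Proof. destruct x; simpl; auto using lt_irrefl. Qed.

Lemma vle_antisym x y : vle x y -> vle y x -> x = y.
Proof.
  destruct x as [b|b|], y as [c|c|]; simpl; try tauto; intros H1 H2;
  f_equal; apply not_lt_antisym; auto.
Qed.

Lemma vle_trans x y z : vle x y -> vle y z -> vle x z.
Proof.
  destruct x as [b|b|], y as [c|c|], z as [d|d|]; simpl; try tauto; intros H1 H2.
  - exact (not_lt_trans H1 H2).
  - exact (not_lt_trans H2 H1).
Qed.

Lemma vle_total x y : vle x y \/ vle y x.
Proof.
  destruct x as [b|b|], y as [c|c|]; simpl; auto;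
  destruct (lt_trichotomy b c) as [->|[H|H]]; rewrite ?lt_irrefl, ?(lt_asym H); auto.
Qed.

Lemma leVb_iff x y : leVb lt x y = true <-> vle x y.
Proof.
  destruct x as [b|b|], y as [c|c|]; simpl; try (split; congruence || tauto);
  destruct (lt _ _); simpl; split; congruence.
Qed.

Lemma minV_l x y : vle x y -> minV lt x y = x.
Proof. intros H. unfold minV. apply leVb_iff in H. now rewrite H. Qed.

Lemma minV_r x y : vle y x -> minV lt x y = y.
Proof.
  intros H. unfold minV. destruct (leVb lt x y) eqn:Hb; auto.
  apply leVb_iff in Hb. now apply vle_antisym.
Qed.

Lemma minV_comm x y : minV lt x y = minV lt y x.
Proof.
  destruct (vle_total x y) as [H|H]; now rewrite (minV_l H), (minV_r H).
Qed.

(* [V] is a complete lattice: the least upper bound is the least [T_d] of [S] if there is one,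
   else [0] if [0] is in [S] or the [F]-part of [S] is unbounded, else the least [F]-bound. *)
Lemma supV_exists (S : V O -> Prop) : exists v, is_sup lt S v.
Proof.
  destruct (classic (exists d, S (VT d))) as [HT|HT].
  - destruct (exists_least HT) as [m [Hm Hmin]].
    exists (VT m); split.
    + intros [b|b|] Hw; simpl; auto.
    + intros u Hu; apply Hu; auto.
  - destruct (classic (S (V0 O) \/ ~ exists g, forall b, S (VF b) -> lt g b = false))
      as [H0|H0].
    + exists (V0 O); split.
      * intros [b|b|] Hw; simpl; auto. exact (HT (ex_intro _ b Hw)).
      * intros [g|g|] Hu; simpl; auto.
        destruct H0 as [H0|H0]; [exact (Hu _ H0)|].
        apply H0. exists g. intros b Hb. exact (Hu _ Hb).
    + apply not_or_and in H0 as [H0 HB]. apply NNPP in HB.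
      destruct (exists_least HB) as [m [Hm Hmin]].
      exists (VF m); split.
      * intros [b|b|] Hw; simpl; auto. exact (HT (ex_intro _ b Hw)).
      * intros [g|g|] Hu; simpl; auto.
        apply Hmin. intros b Hb. exact (Hu _ Hb).
Qed.

Lemma supV_spec S : is_sup lt S (supV lt S).
Proof. unfold supV. apply epsilon_spec, supV_exists. Qed.

Lemma supV_ub (S : V O -> Prop) w : S w -> vle w (supV lt S).
Proof. apply (proj1 (supV_spec S)). Qed.

Lemma supV_least (S : V O -> Prop) u : (forall w, S w -> vle w u) -> vle (supV lt S) u.
Proof. apply (proj2 (supV_spec S)). Qed.

Lemma supV_cofinal (S S' : V O -> Prop) :
  (forall v, S v -> exists v', S' v' /\ vle v v') -> vle (supV lt S) (supV lt S').
Proof.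
  intros H. apply supV_least. intros v Hv.
  destruct (H v Hv) as [v' [Hv' Hle]]. exact (vle_trans Hle (supV_ub Hv')).
Qed.

Lemma supV_exceeds (S : V O -> Prop) v :
  ~ vle (supV lt S) v -> exists w, S w /\ ~ vle w v.
Proof.
  intros H. apply NNPP; intros Hn. apply H, supV_least. intros w Hw.
  apply NNPP; intros Hw'. apply Hn; eauto.
Qed.

(* A supremum of the form [T_b] is attained, since [T_(b+1)] is the predecessor of [T_b]. *)
Lemma supV_T_attained (S : V O -> Prop) b : supV lt S = VT b -> S (VT b).
Proof.
  intros Hs. apply NNPP; intros Hn.
  assert (Hub : vle (supV lt S) (VT (succ b))).
  { apply supV_least. intros [c|c|] Hc; simpl; auto.
    assert (Hbc : vle (VT c) (VT b)) by (rewrite <- Hs; apply supV_ub; auto).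
    simpl in Hbc. destruct (not_lt Hbc) as [->|Hlt]; [contradiction|].
    exact (succ_least Hlt). }
  rewrite Hs in Hub. simpl in Hub. rewrite lt_succ in Hub. discriminate.
Qed.

Variable a : O.

Definition banded (x : V O) : Prop := vle (VF a) x /\ vle x (VT a).
Definition interior (x : V O) : Prop := banded x /\ x <> VF a /\ x <> VT a.

(* Inside the band, [x [=_a y] only distinguishes the two end points from the interior. *)
Definition band_le (x y : V O) : Prop := (x = VT a -> y = VT a) /\ (y = VF a -> x = VF a).

Lemma band_top x : banded x -> vle (VT a) x -> x = VT a.
Proof. intros [_ H] H'. now apply vle_antisym. Qed.

Lemma band_bottom x : banded x -> vle x (VF a) -> x = VF a.
Proof. intros [H _] H'. now apply vle_antisym. Qed.

Lemma banded_between x y z : banded x -> banded z -> vle x y -> vle y z -> banded y.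
Proof.
  intros [Hx _] [_ Hz] Hxy Hyz. split; [exact (vle_trans Hx Hxy) | exact (vle_trans Hyz Hz)].
Qed.

Lemma ord_ge_banded x : ord_ge lt x a <-> banded x.
Proof. destruct x; unfold banded; simpl; tauto. Qed.

Lemma ord_gt_interior x : ord_gt lt x a <-> interior x.
Proof.
  unfold interior, banded.
  destruct x as [b|b|]; simpl; [| |repeat split; auto; discriminate].
  all: split; [intros H; rewrite (lt_asym H); repeat split; try discriminate;
               injection 1; intros ->; now rewrite lt_irrefl in H|].
  all: intros [Hb [Hne Hne']]; assert (H : lt b a = false) by tauto.
  all: destruct (not_lt H) as [->|]; auto; congruence.
Qed.

Lemma ord_lt_not_banded x : ord_lt lt x a <-> ~ banded x.
Proof. unfold banded. destruct x; simpl; [destruct (lt _ a)..|]; intuition congruence. Qed.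

Lemma sqle_iff x y : sqle lt a x y <-> x = y \/ (banded x /\ banded y /\ band_le x y).
Proof.
  unfold sqle, band_le. rewrite !ord_ge_banded, !ord_gt_interior. unfold interior.
  split.
  - intros [Heq|[Bx [By H]]]; [now left | right; split; [|split]; auto].
    destruct H as [[[_ [Fx Tx]] [_ [Fy Ty]]]|[->| ->]]; split; intros; congruence.
  - intros [Heq|[Bx [By [HT HF]]]]; [now left | right; split; [|split]; auto].
    destruct (classic (x = VF a)) as [Fx|Fx]; [now right; left|].
    destruct (classic (y = VT a)) as [Ty|Ty]; [now right; right|].
    left. split; split; auto; split; intros E; auto.
Qed.

Lemma sqle_refl x : sqle lt a x x.
Proof. now left. Qed.

Lemma sqle_trans x y z : sqle lt a x y -> sqle lt a y z -> sqle lt a x z.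
Proof.
  rewrite !sqle_iff. unfold band_le.
  intros [<-|[Bx [By Hxy]]] [<-|[By' [Bz Hyz]]]; auto; right; tauto.
Qed.

Lemma sqeq_refl x : sqeq lt a x x.
Proof. split; apply sqle_refl. Qed.

Lemma sqeq_sym x y : sqeq lt a x y -> sqeq lt a y x.
Proof. unfold sqeq; tauto. Qed.

Lemma sqeq_trans x y z : sqeq lt a x y -> sqeq lt a y z -> sqeq lt a x z.
Proof. intros [H1 H2] [H3 H4]. split; eapply sqle_trans; eauto. Qed.

Lemma sqle_rigid x y : sqle lt a x y -> ~ banded x \/ ~ banded y -> x = y.
Proof. rewrite sqle_iff. tauto. Qed.

Lemma sqle_banded x y : sqle lt a x y -> (banded x <-> banded y).
Proof. rewrite sqle_iff. intros [<-|]; tauto. Qed.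

Lemma sqle_T y : sqle lt a (VT a) y -> y = VT a.
Proof. rewrite sqle_iff. unfold band_le. intros [|]; intuition. Qed.

Lemma sqle_F x : sqle lt a x (VF a) -> x = VF a.
Proof. rewrite sqle_iff. unfold band_le. intros [|]; intuition. Qed.

Lemma sqle_above_F x y : sqle lt a x y -> ~ vle x (VF a) -> ~ vle y (VF a).
Proof.
  rewrite sqle_iff. intros [<-|[Bx [By [_ HF]]]] Hx; auto.
  intros Hy. apply Hx. rewrite (HF (band_bottom By Hy)). apply vle_refl.
Qed.

Lemma sqeq_interior x y : interior x -> interior y -> sqeq lt a x y.
Proof.
  intros [Bx [Fx Tx]] [By [Fy Ty]]. split; apply sqle_iff; right; unfold band_le; tauto.
Qed.

Lemma sqle_between x y y' :
  sqle lt a y y' -> (vle y x /\ vle x y') \/ (vle y' x /\ vle x y) ->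
  sqle lt a y x /\ sqle lt a x y'.
Proof.
  intros H Hx. apply sqle_iff in H as [<-|[By [By' [HT HF]]]].
  - assert (x = y) as -> by (destruct Hx as [[]|[]]; apply vle_antisym; auto).
    split; apply sqle_refl.
  - assert (Bx : banded x).
    { destruct Hx as [[H1 H2]|[H1 H2]];
        [exact (banded_between By By' H1 H2) | exact (banded_between By' By H1 H2)]. }
    rewrite !sqle_iff. unfold band_le.
    destruct Hx as [[H1 H2]|[H1 H2]]; split; right;
      (split; [assumption | split; [assumption | split]]); intros E; subst.
    + now apply band_top.
    + now apply band_bottom.
    + now apply band_top.
    + now apply band_bottom.
    + apply band_top; auto. now rewrite <- HT.
    + apply HF, band_bottom; auto.
    + apply HT, band_top; auto.
    + apply band_bottom; auto. now rewrite <- HF.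
Qed.

Lemma negV_interior x : banded x -> interior (negV succ x).
Proof.
  rewrite <- ord_ge_banded, <- ord_gt_interior.
  destruct x as [b|b|]; simpl; auto; intros H; exact (not_lt_lt_trans H (lt_succ b)).
Qed.

Lemma negV_mono x y : sqle lt a x y -> sqle lt a (negV succ x) (negV succ y).
Proof.
  intros H. destruct (classic (banded x)) as [Bx|Bx].
  - apply (sqeq_interior (negV_interior Bx) (negV_interior (proj1 (sqle_banded H) Bx))).
  - rewrite (sqle_rigid H (or_introl Bx)). apply sqle_refl.
Qed.

Lemma minV_mono_r x y y' : sqle lt a y y' -> sqle lt a (minV lt x y) (minV lt x y').
Proof.
  intros H.
  destruct (vle_total x y) as [Hy|Hy], (vle_total x y') as [Hy'|Hy'];
    rewrite ?(minV_l Hy), ?(minV_r Hy), ?(minV_l Hy'), ?(minV_r Hy').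
  - apply sqle_refl.
  - exact (proj2 (sqle_between H (or_intror (conj Hy' Hy)))).
  - exact (proj1 (sqle_between H (or_introl (conj Hy Hy')))).
  - exact H.
Qed.

Lemma minV_mono x x' y y' :
  sqle lt a x x' -> sqle lt a y y' -> sqle lt a (minV lt x y) (minV lt x' y').
Proof.
  intros Hx Hy. apply sqle_trans with (minV lt x y'); [now apply minV_mono_r|].
  rewrite (minV_comm x), (minV_comm x'). now apply minV_mono_r.
Qed.

(* The key case of monotonicity of suprema: the sets meet the band and stay below [T_a], so both
   suprema lie in the band, and the end points [T_a] / values above [F_a] are transported. *)
Lemma supV_mono_band (S S' : V O -> Prop) :
  (forall v, S v -> exists v', S' v' /\ sqle lt a v v') ->
  (forall v', S' v' -> exists v, S v /\ sqle lt a v v') ->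
  (forall v, S v -> vle v (VT a)) -> (exists b, S b /\ banded b) ->
  sqle lt a (supV lt S) (supV lt S').
Proof.
  intros Hup Hdown Htop [b [Hb Bb]].
  assert (Htop' : forall v', S' v' -> vle v' (VT a)).
  { intros v' Hv'. destruct (Hdown v' Hv') as [v [Hv Hle]].
    destruct (classic (banded v')) as [[_ H]|Bv']; auto.
    rewrite <- (sqle_rigid Hle (or_intror Bv')). auto. }
  destruct (Hup b Hb) as [b' [Hb' Hbb']].
  assert (Bs : banded (supV lt S)).
  { split; [exact (vle_trans (proj1 Bb) (supV_ub Hb)) | exact (supV_least Htop)]. }
  assert (Bs' : banded (supV lt S')).
  { split; [exact (vle_trans (proj1 (proj1 (sqle_banded Hbb') Bb)) (supV_ub Hb'))
           | exact (supV_least Htop')]. }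
  apply sqle_iff; right; split; [exact Bs | split; [exact Bs' | split]].
  - intros HsT. destruct (Hup _ (supV_T_attained HsT)) as [t [Ht Hle]].
    apply band_top; auto. rewrite <- (sqle_T Hle). exact (supV_ub Ht).
  - intros Hs'F. apply band_bottom; auto. apply NNPP; intros Hn.
    destruct (supV_exceeds Hn) as [w [Hw Hwn]]. destruct (Hup w Hw) as [w' [Hw' Hle]].
    apply (sqle_above_F Hle Hwn). rewrite <- Hs'F. exact (supV_ub Hw').
Qed.

(* Suprema are monotone for [[=_a] on sets related elementwise in both directions.  Outside the
   key case the two sets are mutually cofinal, hence have equal suprema: either they have no
   banded element and then coincide, or [S] has an element above [T_a], which lies in both sets
   and bounds every banded value. *)
Lemma supV_mono (S S' : V O -> Prop) :
  (forall v, S v -> exists v', S' v' /\ sqle lt a v v') ->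
  (forall v', S' v' -> exists v, S v /\ sqle lt a v v') ->
  sqle lt a (supV lt S) (supV lt S').
Proof.
  intros Hup Hdown.
  destruct (classic (forall v, S v -> vle v (VT a))) as [Htop|Htop];
    [destruct (classic (exists b, S b /\ banded b)) as [Hb|Hb]|].
  - exact (supV_mono_band Hup Hdown Htop Hb).
  - assert (Hsame : forall v v', S v -> sqle lt a v v' -> v = v').
    { intros v v' Hv Hle. apply (sqle_rigid Hle). left; intros Bv. apply Hb; eauto. }
    assert (Hsup : supV lt S = supV lt S').
    { apply vle_antisym; apply supV_cofinal.
      - intros v Hv. destruct (Hup v Hv) as [v' [Hv' Hle]].
        rewrite (Hsame v v' Hv Hle). exists v'. split; auto. apply vle_refl.
      - intros v' Hv'. destruct (Hdown v' Hv') as [v [Hv Hle]].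
        rewrite <- (Hsame v v' Hv Hle). exists v. split; auto. apply vle_refl. }
    rewrite Hsup. apply sqle_refl.
  - apply not_all_ex_not in Htop as [h Hh]. apply imply_to_and in Hh as [Hh Hgt].
    assert (Bh : ~ banded h) by (intros [_ H]; auto).
    destruct (Hup h Hh) as [h' [Hh' Hle]]. rewrite <- (sqle_rigid Hle (or_introl Bh)) in Hh'.
    assert (Hbig : forall v, banded v -> vle v h).
    { intros v [_ Hv]. apply (vle_trans Hv).
      destruct (vle_total h (VT a)); [contradiction | assumption]. }
    assert (Hsup : supV lt S = supV lt S').
    { apply vle_antisym; apply supV_cofinal.
      - intros v Hv. destruct (Hup v Hv) as [v' [Hv' Hle']].
        apply sqle_iff in Hle' as [<-|[Bv _]]; [exists v; split; auto; apply vle_refl|].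
        exists h. auto.
      - intros v' Hv'. destruct (Hdown v' Hv') as [v [Hv Hle']].
        apply sqle_iff in Hle' as [->|[_ [Bv' _]]]; [exists v'; split; auto; apply vle_refl|].
        exists h. auto. }
    rewrite Hsup. apply sqle_refl.
Qed.

Variable Z : Type.

Definition lit_atom (l : literal Z) : Z := match l with Pos q | Neg q => q end.

Definition body_lits (bd : body Z) : list (literal Z) :=
  match bd with BLits ls => ls | _ => [] end.

Lemma eval_body_mono (I J : interp O Z) bd :
  (forall l, In l (body_lits bd) -> sqle lt a (I (lit_atom l)) (J (lit_atom l))) ->
  sqle lt a (eval_body lt o0 succ I bd) (eval_body lt o0 succ J bd).
Proof.
  destruct bd as [ls| |]; simpl; intros H; try apply sqle_refl.
  induction ls as [|l ls IH]; simpl in *; [apply sqle_refl|].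
  apply minV_mono; auto.
  destruct l; simpl; [|apply negV_mono]; exact (H _ (or_introl eq_refl)).
Qed.

Lemma TP_mono (P : program Z) : alpha_monotonic lt a (TP lt o0 succ P).
Proof.
  intros I J H p. unfold TP. apply supV_mono.
  - intros v [r [Hr [Hh <-]]]. exists (eval_body lt o0 succ J (rbody r)).
    split; [eauto | apply eval_body_mono; auto].
  - intros v [r [Hr [Hh <-]]]. exists (eval_body lt o0 succ I (rbody r)).
    split; [eauto | apply eval_body_mono; auto].
Qed.

Definition chain (c : nat -> V O) : Prop := forall n, sqle lt a (c n) (c (S n)).

Definition lub_chain (c : nat -> V O) : V O :=
  lubA lt succ a (c 0) (fun v => exists n, c n = v).

Lemma chain_le c : chain c -> forall n m, n <= m -> sqle lt a (c n) (c m).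
Proof.
  intros Hc n m Hnm. induction Hnm as [|m _ IH]; [apply sqle_refl | exact (sqle_trans IH (Hc m))].
Qed.

(* A chain is eventually constant up to [=_a]: inside the band it can only move from [F_a]
   to the interior and from there to [T_a]. *)
Lemma chain_stable c : chain c -> exists N, forall n, N <= n -> sqeq lt a (c n) (c N).
Proof.
  intros Hc. pose proof (chain_le Hc) as Hle.
  destruct (classic (banded (c 0))) as [B0|B0].
  2:{ exists 0. intros n _. rewrite <- (sqle_rigid (Hle 0 n (le_0_n n)) (or_introl B0)).
      apply sqeq_refl. }
  assert (Bn : forall n, banded (c n)) by (intros n; exact (proj1 (sqle_banded (Hle 0 n (le_0_n n))) B0)).
  destruct (classic (exists N, c N = VT a)) as [[N HN]|HT].
  { exists N. intros n Hn. pose proof (Hle N n Hn) as H. rewrite HN in *.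
    rewrite (sqle_T H). apply sqeq_refl. }
  assert (HnT : forall n, c n <> VT a) by eauto.
  destruct (classic (exists N, c N <> VF a)) as [[N HN]|HF].
  { exists N. intros n Hn. apply sqeq_interior; split; auto; split; auto.
    intros E. apply HN, sqle_F. rewrite <- E. exact (Hle N n Hn). }
  assert (HallF : forall n, c n = VF a) by (intros n; apply NNPP; eauto).
  exists 0. intros n _. rewrite !HallF. apply sqeq_refl.
Qed.

Lemma lub_chain_class (c : nat -> V O) w :
  (forall n, sqle lt a (c n) w) -> (exists n, sqeq lt a (c n) w) -> sqeq lt a (lub_chain c) w.
Proof.
  intros Hle [n0 Hn0]. unfold lub_chain, lubA.
  destruct (excluded_middle_informative (ord_lt lt (c 0) a)) as [B0|B0];
    rewrite ord_lt_not_banded in B0.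
  { rewrite (sqle_rigid (Hle 0) (or_introl B0)). apply sqeq_refl. }
  apply NNPP in B0.
  destruct (excluded_middle_informative (exists n, c n = VT a)) as [[n HT]|HT].
  { pose proof (Hle n) as H. rewrite HT in H. rewrite (sqle_T H). apply sqeq_refl. }
  destruct (excluded_middle_informative (forall y, (exists n, c n = y) -> y = VF a))
    as [HF|HF].
  { pose proof (proj2 Hn0) as H. rewrite (HF _ (ex_intro _ n0 eq_refl)) in H.
    rewrite (sqle_F H). apply sqeq_refl. }
  apply sqeq_interior.
  - apply ord_gt_interior. exact (lt_succ a).
  - split; [exact (proj1 (sqle_banded (Hle 0)) B0) | split].
    + intros E. apply HF. intros y [n <-]. apply sqle_F. rewrite <- E. apply Hle.
    + intros E. apply HT. exists n0. apply sqle_T. rewrite <- E. exact (proj2 Hn0).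
Qed.

Lemma lub_chain_spec c : chain c ->
  (forall n, sqle lt a (c n) (lub_chain c)) /\
  exists N, forall n, N <= n -> sqeq lt a (c n) (lub_chain c).
Proof.
  intros Hc. destruct (chain_stable Hc) as [N HN].
  assert (Hbound : forall n, sqle lt a (c n) (c N)).
  { intros n. destruct (PeanoNat.Nat.le_ge_cases n N) as [H|H];
      [exact (chain_le Hc H) | exact (proj1 (HN n H))]. }
  assert (Hlub : sqeq lt a (lub_chain c) (c N)).
  { apply lub_chain_class; eauto using sqeq_refl. }
  split.
  - intros n. exact (sqle_trans (Hbound n) (proj2 Hlub)).
  - exists N. intros n Hn. exact (sqeq_trans (HN n Hn) (sqeq_sym Hlub)).
Qed.

Lemma supV_reached (S : nat -> V O -> Prop) (S' : V O -> Prop) :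
  (forall n, sqle lt a (supV lt (S n)) (supV lt S')) ->
  (forall w, S' w -> exists N w', S N w' /\ sqeq lt a w' w) ->
  exists N, sqeq lt a (supV lt (S N)) (supV lt S').
Proof.
  intros Hle Hreach.
  destruct (classic (banded (supV lt S'))) as [Bt|Bt].
  2:{ exists 0. rewrite (sqle_rigid (Hle 0) (or_intror Bt)). apply sqeq_refl. }
  destruct (classic (supV lt S' = VF a)) as [HtF|HtF].
  { exists 0. pose proof (Hle 0) as H. rewrite HtF in *. rewrite (sqle_F H). apply sqeq_refl. }
  destruct (classic (supV lt S' = VT a)) as [HtT|HtT].
  { destruct (Hreach _ (supV_T_attained HtT)) as [N [w' [Hw' Heq]]].
    exists N. rewrite HtT in *. rewrite (band_top (proj2 (sqle_banded (Hle N)) Bt)).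
    - apply sqeq_refl.
    - rewrite <- (sqle_T (proj2 Heq)). exact (supV_ub Hw'). }
  assert (Ht : ~ vle (supV lt S') (VF a)) by (intros H; apply HtF, band_bottom; auto).
  destruct (supV_exceeds Ht) as [w [Hw Hwn]].
  destruct (Hreach w Hw) as [N [w' [Hw' Heq]]].
  exists N. apply sqeq_interior; [|split; auto].
  assert (Hs : ~ vle (supV lt (S N)) (VF a)).
  { intros H. apply (sqle_above_F (proj2 Heq) Hwn). exact (vle_trans (supV_ub Hw') H). }
  split; [exact (proj2 (sqle_banded (Hle N)) Bt) | split].
  - intros E. apply Hs. rewrite E. apply vle_refl.
  - intros E. apply HtT, sqle_T. rewrite <- E. apply Hle.
Qed.

Lemma eventually_all (X : Type) (Q : nat -> X -> Prop) (l : list X) :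
  (forall x, In x l -> exists N, forall n, N <= n -> Q n x) ->
  exists N, forall n, N <= n -> forall x, In x l -> Q n x.
Proof.
  induction l as [|x l IH]; intros H.
  - exists 0. intros n _ y [].
  - destruct (H x (or_introl eq_refl)) as [N1 HN1].
    destruct IH as [N2 HN2]; [intros y Hy; apply H; now right|].
    exists (Nat.max N1 N2). intros n Hn y [<-|Hy]; [apply HN1 | apply HN2; auto]; lia.
Qed.

Lemma eval_body_eventually (I : nat -> interp O Z) (J : interp O Z) bd :
  (forall z, exists N, forall n, N <= n -> sqeq lt a (I n z) (J z)) ->
  exists N, sqeq lt a (eval_body lt o0 succ (I N) bd) (eval_body lt o0 succ J bd).
Proof.
  intros Hst.
  destruct (eventually_all (Q := fun n l => sqeq lt a (I n (lit_atom l)) (J (lit_atom l)))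
                           (l := body_lits bd)) as [N HN].
  { intros l _. apply Hst. }
  exists N. split; apply eval_body_mono; intros l Hl; apply (HN N (le_n N) l Hl).
Qed.

Lemma TP_reached (P : program Z) (I : nat -> interp O Z) (J : interp O Z) p :
  (forall n, sqleI lt a (I n) J) ->
  (forall z, exists N, forall n, N <= n -> sqeq lt a (I n z) (J z)) ->
  exists N, sqeq lt a (TP lt o0 succ P (I N) p) (TP lt o0 succ P J p).
Proof.
  intros Hle Hst. unfold TP. apply supV_reached.
  - intros n. exact (TP_mono P (Hle n) p).
  - intros w [r [Hr [Hh <-]]]. destruct (eval_body_eventually (rbody r) Hst) as [N HN].
    exists N, (eval_body lt o0 succ (I N) (rbody r)). eauto.
Qed.
End AlphaContinuity.

Theorem mainTheorem19 :
  forall (O : Type) (lt : O -> O -> bool) (o0 : O) (succ : O -> O),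
  is_Omega lt o0 succ ->
  forall (Z : Type) (P : program Z),
  countable_type {r : rule Z | P r} ->
  forall a : O, alpha_continuous lt succ a (TP lt o0 succ P).
Proof.
  intros O lt o0 succ HO Z P _ a. split; [exact (TP_mono HO P)|].
  intros I Hchain p.
  set (J := lubA_seq lt succ a I).
  assert (HJ : forall z, (forall n, sqle lt a (I n z) (J z)) /\
                         exists N, forall n, N <= n -> sqeq lt a (I n z) (J z)).
  { intros z. exact (lub_chain_spec HO (c := fun n => I n z) (fun n => Hchain n z)). }
  apply sqeq_sym, (lub_chain_class HO (c := fun n => TP lt o0 succ P (I n) p)).
  - intros n. apply (TP_mono HO P). intros z. apply HJ.
  - apply (TP_reached HO); [intros n z | intros z]; apply HJ.
Qed.
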